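(* Assume $\beta>0$, $\bar c>0$ and $0<\bar u<\bar c$, $\bar v\in\mathbb{R}$. Let $\Omega_1=(-\infty,0)\times\mathbb{R}$, $\Omega_2=(0,\infty)\times\mathbb{R}$, $\Gamma=\{x=0\}$, $\mathbf n_1=(1,0)$, $\mathbf n_2=(-1,0)$ the outward normals. Let $g$ be given and let $Q$ solve $\mathcal L\mathcal G Q=g$ in $\mathbb{R}^2$. Consider the following iteration. Choose initial values $Q^{1,0}$ on $\Omega_1$, $Q^{2,0}$ on $\Omega_2$ with $\mathcal G Q^{1,0}=\mathcal G Q^{2,0}$ on $\Gamma$; given $(Q^{1,k},Q^{2,k})$: (Correction step) with $\gamma^k=-\tfrac12\big[\mathcal A\nabla\mathcal G Q^{1,k}\cdot\mathbf n_1+\mathcal A\nabla\mathcal G Q^{2,k}\cdot\mathbf n_2\big]$ on $\Gamma$, solve $\mathcal L\mathcal G\tilde Q^{1,k}=0$ in $\Omega_1$, $(\mathcal A\nabla-\tfrac12\mathbf a)\mathcal G\tilde Q^{1,k}\cdot\mathbf n_1=\gamma^k$ on $\Gamma$; and $\mathcal L\mathcal G\tilde Q^{2,k}=0$ in $\Omega_2$, $(\mathcal A\nabla-\tfrac12\mathbf a)\mathcal G\tilde Q^{2,k}\cdot\mathbf n_2=\gamma^k$ and $\tilde Q^{2,k}=0$ on $\Gamma$. (Update step) with $\delta^k=\tfrac12\big[\mathcal G\tilde Q^{1,k}+\mathcal G\tilde Q^{2,k}\big]$ on $\Gamma$, solve $\mathcal L\mathcal G Q^{1,k+1}=g$ in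 $\Omega_1$, $\mathcal G Q^{1,k+1}=\mathcal G Q^{1,k}+\delta^k$ on $\Gamma$; and $\mathcal L\mathcal G Q^{2,k+1}=g$ in $\Omega_2$, $\mathcal G Q^{2,k+1}=\mathcal G Q^{2,k}+\delta^k$ and $Q^{2,k+1}=Q^{1,k}+\tilde Q^{1,k}$ on $\Gamma$. Then the algorithm converges in two iterations: $Q^{1,2}=Q|_{\Omega_1}$ and $Q^{2,2}=Q|_{\Omega_2}$.
   Context: $\mathcal G=\beta+\bar u\partial_x+\bar v\partial_y$ and $\mathcal L=\beta^2+2\bar u\bar v\partial_{xy}+2\beta(\bar u\partial_x+\bar v\partial_y)-(\bar c^2-\bar v^2)\partial_{yy}-(\bar c^2-\bar u^2)\partial_{xx}$, equivalently $\mathcal L=-\mathrm{div}(\mathcal A\nabla)+\mathbf a\cdot\nabla+\beta^2$ with $\mathcal A=\begin{pmatrix}\bar c^2-\bar u^2&-\bar u\bar v\\-\bar u\bar v&\bar c^2-\bar v^2\end{pmatrix}$ and $\mathbf a=2\beta(\bar u,\bar v)$. All problems (local and global) are understood in the Fourier sense in $y$: solutions are functions whose partial Fourier transform $\hat e(x,\xi)=\int_{\mathbb R}e(x,y)e^{-i\xi y}\,dy$ is, for each $\xi$, bounded in $x$ on the relevant domain (as $x\to-\infty$ in $\Omega_1$, as $x\to+\infty$ in $\Omega_2$). *)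

From Stdlib Require Import Reals.
From Coquelicot Require Import Coquelicot.
Open Scope R_scope.

(* Fourier-sense representation: a function e(x,y) is represented by its
   partial Fourier transform in y, ehat : R -> R -> C, ehat xi x = \hat e(x,xi).
   Under this transform d/dy becomes multiplication by (i xi). *)

Definition dn (n : nat) (f : R -> C) (x : R) : C :=
  (Derive_n (fun t => Re (f t)) n x, Derive_n (fun t => Im (f t)) n x).

Definition C3 (f : R -> C) : Prop :=
  forall (x : R) (n : nat), (n <= 3)%nat ->
    ex_derive_n (fun t => Re (f t)) n x /\ ex_derive_n (fun t => Im (f t)) n x.

Definition bounded_on (D : R -> Prop) (f : R -> C) : Prop :=
  exists M : R, forall x, D x -> Cmod (f x) <= M.

Definition Omega1 (x : R) : Prop := x < 0.
Definition Omega2 (x : R) : Prop := 0 < x.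

Definition iy (xi : R) : C := Cmult Ci (RtoC xi).

Section Ops.
Variables (beta cb ub vb : R).

(* G = beta + ub d/dx + vb d/dy, in Fourier variables *)
Definition Gop (xi : R) (f : R -> C) : R -> C := fun x =>
  Cplus (Cplus (Cmult (RtoC beta) (f x)) (Cmult (RtoC ub) (dn 1 f x)))
        (Cmult (RtoC vb) (Cmult (iy xi) (f x))).

(* L = beta^2 + 2 ub vb d_xy + 2 beta (ub d_x + vb d_y)
       - (cb^2 - vb^2) d_yy - (cb^2 - ub^2) d_xx, in Fourier variables *)
Definition Lop (xi : R) (w : R -> C) : R -> C := fun x =>
  Cplus (Cplus (Cplus (Cplus
    (Cmult (RtoC (beta ^ 2)) (w x))
    (Cmult (RtoC (2 * ub * vb)) (Cmult (iy xi) (dn 1 w x))))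
    (Cmult (RtoC (2 * beta))
       (Cplus (Cmult (RtoC ub) (dn 1 w x)) (Cmult (RtoC vb) (Cmult (iy xi) (w x))))))
    (Copp (Cmult (RtoC (cb ^ 2 - vb ^ 2)) (Cmult (iy xi) (Cmult (iy xi) (w x))))))
    (Copp (Cmult (RtoC (cb ^ 2 - ub ^ 2)) (dn 2 w x))).

Definition LGop (xi : R) (f : R -> C) : R -> C := Lop xi (Gop xi f).

(* (A grad w) . n  with A = [[cb^2-ub^2, -ub vb], [-ub vb, cb^2-vb^2]],
   n = (nx, ny) *)
Definition Aflux (xi nx ny : R) (w : R -> C) (x : R) : C :=
  let wx := dn 1 w x in
  let wy := Cmult (iy xi) (w x) in
  Cplus
    (Cmult (RtoC nx) (Cplus (Cmult (RtoC (cb ^ 2 - ub ^ 2)) wx) (Cmult (RtoC (- (ub * vb))) wy)))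
    (Cmult (RtoC ny) (Cplus (Cmult (RtoC (- (ub * vb))) wx) (Cmult (RtoC (cb ^ 2 - vb ^ 2)) wy))).

(* ((A grad - 1/2 a) w) . n  with a = 2 beta (ub, vb) *)
Definition Bflux (xi nx ny : R) (w : R -> C) (x : R) : C :=
  Cplus (Aflux xi nx ny w x)
        (Copp (Cmult (RtoC (/2 * (2 * beta * (ub * nx + vb * ny)))) (w x))).

End Ops.

From Stdlib Require Import Reals Lra Lia.
From Coquelicot Require Import Coquelicot.
Open Scope R_scope.

(* In Fourier variables [L G] is a third-order ODE in [x] with constant
   coefficients, [L G = - kappa ub (d/dx - lambda_p) (d/dx - lambda_m) (d/dx - lambda0)]
   with [Re lambda_p > 0 > Re lambda_m, Re lambda0] and [G = ub (d/dx - lambda0)].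
   A bounded homogeneous solution [h] on [x < 0] is therefore a multiple of
   [e^{lambda_p x}], and one on [x > 0] is killed by [(d/dx - lambda_m) (d/dx - lambda0)];
   on [Gamma] this gives [(G h)' = lambda_p G h] on the left and
   [(G h)' = lambda_m G h] on the right.  Because
   [lambda_p + lambda_m = 2 ub (beta + i vb xi) / kappa],
   both Robin conditions of the correction step then read [alpha * G h(0)] with the same
   [alpha <> 0], so the corrections cancel exactly the common error [a] of [G Q^{i,1}]
   on [Gamma].  After the second update the errors [Q^{i,2} - Q] solve homogeneous
   problems with zero data ([G e = 0] on [Gamma], and [e = 0] there on the right), so
   they vanish. *)

(** * Complex-valued functions of a real variable *)

Definition is_cderive (f : R -> C) (x : R) (l : C) : Prop :=
  is_derive (fun t => Re (f t)) x (Re l) /\ is_derive (fun t => Im (f t)) x (Im l).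

Definition ex_cderive (f : R -> C) (x : R) : Prop :=
  ex_derive (fun t => Re (f t)) x /\ ex_derive (fun t => Im (f t)) x.

Open Scope C_scope.

Lemma Cmult_eq_0_l (p d : C) : p * d = 0 -> d <> 0 -> p = 0.
Proof.
  intros H Hd; replace p with (p * d / d) by (field; exact Hd).
  rewrite H; field; exact Hd.
Qed.

Lemma Cminus_neq_0 (a b : C) : a <> b -> a - b <> 0.
Proof. intros H E; apply H; replace a with (a - b + b) by ring; rewrite E; ring. Qed.

Lemma Cmult_reg_l_neq_0 (c x y : C) : c <> 0 -> c * x = c * y -> x = y.
Proof.
  intros Hc E.
  assert (Z : (x - y) * c = 0) by (transitivity (c * x - c * y); [ring | rewrite E; ring]).
  apply Cmult_eq_0_l in Z; [| exact Hc].
  replace x with (x - y + y) by ring; rewrite Z; ring.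
Qed.

Lemma is_cderive_ex f x l : is_cderive f x l -> ex_cderive f x.
Proof. intros [H1 H2]; split; eexists; eassumption. Qed.

Lemma ex_cderive_dn1 f x : ex_cderive f x -> is_cderive f x (dn 1 f x).
Proof. intros [H1 H2]; split; now apply Derive_correct. Qed.

Lemma is_cderive_dn1 f x l : is_cderive f x l -> dn 1 f x = l.
Proof.
  intros [H1 H2]; apply is_derive_unique in H1, H2.
  apply injective_projections; [exact H1 | exact H2].
Qed.

Lemma is_cderive_ext f g x l :
  (forall t, f t = g t) -> is_cderive f x l -> is_cderive g x l.
Proof.
  intros E [H1 H2]; split; eapply is_derive_ext; try eassumption;
    intros t; simpl; now rewrite E.
Qed.

Lemma dn_ext f g n x : (forall t, f t = g t) -> dn n f x = dn n g x.
Proof. intros E; unfold dn; f_equal; apply Derive_n_ext; intros t; now rewrite E. Qed.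

Lemma ex_cderive_ext f g x : (forall t, f t = g t) -> ex_cderive f x -> ex_cderive g x.
Proof.
  intros E [H1 H2]; split.
  - apply (ex_derive_ext (fun t => Re (f t))); [intros t; now rewrite E | exact H1].
  - apply (ex_derive_ext (fun t => Im (f t))); [intros t; now rewrite E | exact H2].
Qed.

Lemma is_cderive_eq f x l l' : is_cderive f x l -> l = l' -> is_cderive f x l'.
Proof. now intros H <-. Qed.

Lemma is_cderive_const (a : C) x : is_cderive (fun _ => a) x 0.
Proof. split; apply (is_derive_const (K := R_AbsRing) (V := R_NormedModule)). Qed.

Lemma is_cderive_RtoC x : is_cderive RtoC x 1.
Proof.
  split; simpl; [apply (is_derive_id (K := R_AbsRing))
         | apply (is_derive_const (K := R_AbsRing) (V := R_NormedModule))].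
Qed.

Lemma is_cderive_plus f g x lf lg :
  is_cderive f x lf -> is_cderive g x lg ->
  is_cderive (fun t => f t + g t) x (lf + lg).
Proof.
  intros [F1 F2] [G1 G2]; split.
  - exact (is_derive_plus (fun t => Re (f t)) (fun t => Re (g t)) _ _ _ F1 G1).
  - exact (is_derive_plus (fun t => Im (f t)) (fun t => Im (g t)) _ _ _ F2 G2).
Qed.

Lemma is_cderive_mult f g x lf lg :
  is_cderive f x lf -> is_cderive g x lg ->
  is_cderive (fun t => f t * g t) x (lf * g x + f x * lg).
Proof.
  intros [F1 F2] [G1 G2].
  assert (Mult : forall F G dF dG, is_derive F x dF -> is_derive G x dG ->
            is_derive (fun t => F t * G t)%R x (dF * G x + F x * dG)%R).
  { intros F G dF dG HF HG; apply (is_derive_mult F G); auto using Rmult_comm. }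
  split.
  - replace (Re (lf * g x + f x * lg))
      with (Re lf * Re (g x) + Re (f x) * Re lg - (Im lf * Im (g x) + Im (f x) * Im lg))%R
      by (unfold Re, Im; simpl; ring).
    exact (is_derive_minus _ _ _ _ _ (Mult _ _ _ _ F1 G1) (Mult _ _ _ _ F2 G2)).
  - replace (Im (lf * g x + f x * lg))
      with (Re lf * Im (g x) + Re (f x) * Im lg + (Im lf * Re (g x) + Im (f x) * Re lg))%R
      by (unfold Re, Im; simpl; ring).
    eapply is_derive_ext;
      [| exact (is_derive_plus _ _ _ _ _ (Mult _ _ _ _ F1 G2) (Mult _ _ _ _ F2 G1))].
    intros t; reflexivity.
Qed.

Lemma is_cderive_scal (a : C) f x lf :
  is_cderive f x lf -> is_cderive (fun t => a * f t) x (a * lf).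
Proof.
  intros Hf; eapply is_cderive_eq;
    [exact (is_cderive_mult _ _ x _ _ (is_cderive_const a x) Hf) | cbv beta; ring].
Qed.

Lemma is_cderive_minus f g x lf lg :
  is_cderive f x lf -> is_cderive g x lg ->
  is_cderive (fun t => f t - g t) x (lf - lg).
Proof.
  intros [F1 F2] [G1 G2]; split.
  - exact (is_derive_minus (fun t => Re (f t)) (fun t => Re (g t)) _ _ _ F1 G1).
  - exact (is_derive_minus (fun t => Im (f t)) (fun t => Im (g t)) _ _ _ F2 G2).
Qed.

Definition cexp (m : C) (x : R) : C :=
  (exp (Re m * x) * cos (Im m * x), exp (Re m * x) * sin (Im m * x))%R.

Lemma is_cderive_cexp m x : is_cderive (cexp m) x (m * cexp m x).
Proof.
  destruct m as [a b]; split; unfold cexp; simpl; auto_derive; auto; ring.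
Qed.

Lemma cexp_0 m : cexp m 0 = 1.
Proof.
  unfold cexp; rewrite !Rmult_0_r, exp_0, cos_0, sin_0.
  apply injective_projections; simpl; ring.
Qed.

Lemma cexp_plus m x y : cexp m (x + y) = cexp m x * cexp m y.
Proof.
  unfold cexp; rewrite !Rmult_plus_distr_l, exp_plus, cos_plus, sin_plus.
  apply injective_projections; simpl; ring.
Qed.

Lemma cexp_Cplus a b x : cexp (a + b) x = cexp a x * cexp b x.
Proof.
  destruct a as [a1 a2], b as [b1 b2]; unfold cexp; simpl; rewrite !Rmult_plus_distr_r, exp_plus, cos_plus, sin_plus.
  apply injective_projections; simpl; ring.
Qed.

Lemma cexp_opp m x : cexp m (- x) = cexp (- m) x.
Proof. destruct m; unfold cexp; simpl; do 3 f_equal; ring. Qed.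

Lemma cexp_mult_opp m x : cexp m x * cexp (- m) x = 1.
Proof.
  rewrite <- cexp_Cplus, Cplus_opp_r.
  unfold cexp; simpl; rewrite !Rmult_0_l, exp_0, cos_0, sin_0.
  apply injective_projections; simpl; ring.
Qed.

Lemma Cmod_cexp m x : Cmod (cexp m x) = exp (Re m * x).
Proof.
  unfold Cmod, cexp; simpl.
  pose proof (sin2_cos2 (Im m * x)); unfold Rsqr in *.
  match goal with |- sqrt ?a = _ =>
    replace a with (exp (Re m * x) * exp (Re m * x))%R by nra end.
  apply sqrt_square; left; apply exp_pos.
Qed.

Lemma Cmod_cexp_le_1 m x : (Re m * x <= 0)%R -> (Cmod (cexp m x) <= 1)%R.
Proof.
  intros H; rewrite Cmod_cexp, <- exp_0.
  destruct H as [H | ->]; [left; apply exp_increasing, H | right; reflexivity].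
Qed.

Lemma cexp_neq_0 m x : cexp m x <> 0.
Proof.
  intros E; apply (f_equal Cmod) in E.
  rewrite Cmod_cexp, Cmod_0 in E; pose proof (exp_pos (Re m * x)); lra.
Qed.

(** * First-order equations and growth of exponentials *)

Definition between (x t : R) : Prop := (0 < t < x \/ x < t < 0)%R.

Lemma between_left x t : (x < 0)%R -> between x t -> (t < 0)%R.
Proof. unfold between; lra. Qed.

Lemma between_right x t : (0 < x)%R -> between x t -> (0 < t)%R.
Proof. unfold between; lra. Qed.

Lemma is_derive_zero_between (F dF : R -> R) x :
  (forall t, is_derive F t (dF t)) -> (forall t, between x t -> dF t = 0%R) ->
  F x = F 0.
Proof.
  intros HD HZ.
  destruct (Rtotal_order x 0) as [Hx | [-> | Hx]]; [| reflexivity |].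
  - destruct (MVT_cor2 F dF x 0 Hx) as [c [Hc Hcx]].
    + intros c _; apply is_derive_Reals, HD.
    + rewrite HZ in Hc by (right; lra); lra.
  - destruct (MVT_cor2 F dF 0 x Hx) as [c [Hc Hcx]].
    + intros c _; apply is_derive_Reals, HD.
    + rewrite HZ in Hc by (left; lra); lra.
Qed.

Lemma is_cderive_zero_between (phi dphi : R -> C) x :
  (forall t, is_cderive phi t (dphi t)) -> (forall t, between x t -> dphi t = 0) ->
  phi x = phi 0.
Proof.
  intros HD HZ; apply injective_projections.
  - apply (is_derive_zero_between (fun t => Re (phi t)) (fun t => Re (dphi t))).
    + intros t; apply HD.
    + intros t Ht; rewrite HZ by exact Ht; reflexivity.
  - apply (is_derive_zero_between (fun t => Im (phi t)) (fun t => Im (dphi t))).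
    + intros t; apply HD.
    + intros t Ht; rewrite HZ by exact Ht; reflexivity.
Qed.

Definition dsub (c : C) (F : R -> C) (t : R) : C := dn 1 F t - c * F t.

Lemma dsub_cexp_affine f m c x :
  (forall t, ex_cderive f t) ->
  (forall t, between x t -> dsub m f t = c * cexp m t) ->
  f x = (f 0 + c * x) * cexp m x.
Proof.
  intros Hf Hm.
  assert (Const : f x * cexp (- m) x - c * x = f 0 * cexp (- m) 0 - c * 0).
  { apply (is_cderive_zero_between (fun t => f t * cexp (- m) t - c * t)
             (fun t => cexp (- m) t * dsub m f t - c)).
    - intros t; eapply is_cderive_eq.
      + apply is_cderive_minus.
        * apply is_cderive_mult; [apply ex_cderive_dn1, Hf | apply is_cderive_cexp].
        * apply is_cderive_scal, is_cderive_RtoC.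
      + unfold dsub; ring.
    - intros t Ht; rewrite Hm by exact Ht.
      transitivity (c * (cexp m t * cexp (- m) t) - c); [ring |].
      rewrite cexp_mult_opp; ring. }
  rewrite cexp_0 in Const.
  transitivity ((f x * cexp (- m) x - c * x + c * x) * cexp m x).
  - transitivity (f x * (cexp m x * cexp (- m) x)); [rewrite cexp_mult_opp |]; ring.
  - rewrite Const; ring.
Qed.

Lemma dsub_zero_cexp f m x :
  (forall t, ex_cderive f t) -> (forall t, between x t -> dsub m f t = 0) ->
  f x = f 0 * cexp m x.
Proof.
  intros Hf Hm; rewrite (dsub_cexp_affine f m 0 x Hf); [ring |].
  intros t Ht; rewrite Hm by exact Ht; ring.
Qed.

Lemma exp_unbounded u M : (0 < u)%R -> exists K, (0 < K)%R /\ (M < u * exp K)%R.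
Proof.
  intros Hu; set (K := (Rabs M / u + 1)%R).
  assert (HK0 : (0 <= Rabs M / u)%R) by (apply Rdiv_le_0_compat; [apply Rabs_pos | lra]).
  exists K; split; [unfold K; lra |].
  assert (HuK : (u * (Rabs M / u) = Rabs M)%R) by (field; lra).
  pose proof (exp_ineq1 K ltac:(unfold K; lra)); pose proof (Rle_abs M).
  unfold K in *; nra.
Qed.

Lemma cexp_bounded_left (m p : C) (M : R) : (Re m < 0)%R ->
  (forall x, (x < 0)%R -> (Cmod (p * cexp m x) <= M)%R) -> p = 0.
Proof.
  intros Hm HB.
  destruct (Req_dec (Cmod p) 0) as [E | NE]; [now apply Cmod_eq_0 | exfalso].
  assert (Hp : (0 < Cmod p)%R) by (pose proof (Cmod_ge_0 p); lra).
  destruct (exp_unbounded _ M Hp) as [K [HK HE]].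
  assert (Hx : (K / Re m < 0)%R) by (apply Rdiv_pos_neg; lra).
  specialize (HB _ Hx); rewrite Cmod_mult, Cmod_cexp in HB.
  replace (Re m * (K / Re m))%R with K in HB by (field; lra); lra.
Qed.

Lemma cexp_neq_1 (d : C) : d <> 0 -> exists T, (0 < T)%R /\ cexp d T <> 1.
Proof.
  intros Hd; destruct d as [a b].
  destruct (Req_dec a 0) as [-> | Ha].
  - assert (Hb : b <> 0%R) by (intros ->; apply Hd; reflexivity).
    exists (PI / Rabs b)%R; split.
    + apply Rdiv_lt_0_compat; [apply PI_RGT_0 | apply Rabs_pos_lt; exact Hb].
    + intros E; apply (f_equal fst) in E; unfold cexp in E; simpl in E.
      rewrite Rmult_0_l, exp_0, Rmult_1_l in E.
      destruct (Rle_or_lt 0 b).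
      * rewrite Rabs_right in E by lra.
        replace (b * (PI / b))%R with PI in E by (field; lra).
        rewrite cos_PI in E; lra.
      * rewrite Rabs_left in E by lra.
        replace (b * (PI / - b))%R with (- PI)%R in E by (field; lra).
        rewrite cos_neg, cos_PI in E; lra.
  - exists 1%R; split; [lra |]; intros E.
    apply (f_equal Cmod) in E; rewrite Cmod_cexp, Cmod_1, Rmult_1_r in E; simpl in E.
    destruct (Rlt_or_le 0 a).
    + pose proof (exp_ineq1 a Ha); lra.
    + pose proof (exp_increasing a 0 ltac:(lra)); rewrite exp_0 in *; lra.
Qed.

(* With [f x = p e^{m1 x} + q e^{m2 x}], [f (x - T) - e^{-m2 T} f x = p k e^{m1 x}]
   where [k = e^{-m1 T} - e^{-m2 T}] is nonzero for a suitable [T]. *)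
Lemma cexp2_bounded_left (m1 m2 p q : C) (M : R) :
  m1 <> m2 -> (Re m1 < 0)%R -> (Re m2 < 0)%R ->
  (forall x, (x < 0)%R -> (Cmod (p * cexp m1 x + q * cexp m2 x) <= M)%R) ->
  p = 0 /\ q = 0.
Proof.
  intros Hne H1 H2 HB.
  assert (Hd : m2 - m1 <> 0) by (intros E; apply Hne;
    replace m2 with (m2 - m1 + m1) by ring; rewrite E; ring).
  destruct (cexp_neq_1 _ Hd) as [T [HT HE]].
  set (k := cexp (- m1) T - cexp (- m2) T).
  assert (Hk : k <> 0).
  { intros E; apply HE.
    assert (E2 : (cexp (m2 - m1) T - 1) * cexp (- m2) T = 0).
    { rewrite <- E; unfold k.
      replace (- m1) with (- m2 + (m2 - m1)) by ring; rewrite cexp_Cplus; ring. }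
    apply Cmult_eq_0_l in E2; [| apply cexp_neq_0].
    replace (cexp (m2 - m1) T) with (cexp (m2 - m1) T - 1 + 1) by ring.
    rewrite E2; ring. }
  assert (Hp : p * k = 0).
  { apply (cexp_bounded_left m1 _ (M + Cmod (cexp (- m2) T) * M)); [exact H1 |].
    intros x Hx.
    replace (p * k * cexp m1 x) with
      ((p * cexp m1 (x + - T) + q * cexp m2 (x + - T))
       - cexp (- m2) T * (p * cexp m1 x + q * cexp m2 x))
      by (rewrite !cexp_plus, !cexp_opp; unfold k; ring).
    eapply Rle_trans; [apply Cmod_triangle |]; rewrite Cmod_opp, Cmod_mult.
    pose proof (Cmod_ge_0 (cexp (- m2) T)).
    pose proof (HB x Hx); pose proof (HB (x + - T)%R ltac:(lra)); nra. }
  apply Cmult_eq_0_l in Hp; [subst p; split; [reflexivity |] | exact Hk].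
  apply (cexp_bounded_left m2 _ M H2); intros x Hx.
  replace (q * cexp m2 x) with (0 * cexp m1 x + q * cexp m2 x) by ring; auto.
Qed.

Lemma affine_cexp_bounded_left (m p q : C) (M : R) : (Re m < 0)%R ->
  (forall x, (x < 0)%R -> (Cmod ((p + q * x) * cexp m x) <= M)%R) -> p = 0 /\ q = 0.
Proof.
  intros Hm HB.
  assert (Hq : - q = 0).
  { apply (cexp_bounded_left m _ (Cmod (cexp m 1) * M + M) Hm); intros x Hx.
    replace (- q * cexp m x) with
      (cexp m 1 * ((p + q * (x - 1)%R) * cexp m (x - 1)) - (p + q * x) * cexp m x).
    - eapply Rle_trans; [apply Cmod_triangle |]; rewrite Cmod_opp, Cmod_mult.
      pose proof (Cmod_ge_0 (cexp m 1)).
      pose proof (HB x Hx); pose proof (HB (x - 1)%R ltac:(lra)); nra.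
    - rewrite RtoC_minus; unfold Rminus; rewrite cexp_plus, cexp_opp.
      transitivity ((p + q * x - q) * cexp m x * (cexp m 1 * cexp (- m) 1)
                    - (p + q * x) * cexp m x); [ring |].
      rewrite cexp_mult_opp; ring. }
  assert (q = 0) by (replace q with (- - q) by ring; rewrite Hq; ring); subst q.
  split; [| reflexivity].
  apply (cexp_bounded_left m _ M Hm); intros x Hx.
  replace (p * cexp m x) with ((p + 0 * x) * cexp m x) by ring; auto.
Qed.

(* [e^{r x} >= (1 + r x / 2)^2] grows quadratically, beating any [A + B x]. *)
Lemma cexp_linear_bound_right (m a : C) (A B : R) : (0 < Re m)%R ->
  (forall x, (0 < x)%R -> (Cmod (a * cexp m x) <= A + B * x)%R) -> a = 0.
Proof.
  intros Hm HB.
  destruct (Req_dec (Cmod a) 0) as [E | NE]; [now apply Cmod_eq_0 | exfalso].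
  assert (Hu : (0 < Cmod a)%R) by (pose proof (Cmod_ge_0 a); lra).
  set (r := Re m) in *; set (u := Cmod a) in *.
  assert (Hur : (0 < u * r * r)%R) by (apply Rmult_lt_0_compat; [apply Rmult_lt_0_compat |]; lra).
  set (x := (4 * (Rabs A + Rabs B + 1) / (u * r * r) + 1)%R).
  assert (Hx0 : (0 <= 4 * (Rabs A + Rabs B + 1) / (u * r * r))%R).
  { apply Rdiv_le_0_compat; [pose proof (Rabs_pos A); pose proof (Rabs_pos B) |]; lra. }
  assert (Hx1 : (1 <= x)%R) by (unfold x; lra).
  assert (Hux : (u * r * r * x >= 4 * (Rabs A + Rabs B + 1))%R).
  { unfold x; rewrite Rmult_plus_distr_l.
    replace (u * r * r * (4 * (Rabs A + Rabs B + 1) / (u * r * r)))%R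
      with (4 * (Rabs A + Rabs B + 1))%R by (field; lra); lra. }
  specialize (HB x ltac:(lra)); rewrite Cmod_mult, Cmod_cexp in HB; fold r u in HB.
  assert (Hexp : (exp (r * x) > (1 + r * x / 2) * (1 + r * x / 2))%R).
  { replace (r * x)%R with (r * x / 2 + r * x / 2)%R at 1 by field; rewrite exp_plus.
    assert (Hrx : (0 < r * x / 2)%R) by (apply Rdiv_lt_0_compat; nra).
    pose proof (exp_ineq1 (r * x / 2) (Rgt_not_eq _ _ Hrx)); nra. }
  pose proof (Rle_abs A); pose proof (Rle_abs B); pose proof (Rabs_pos A); pose proof (Rabs_pos B).
  assert (u * (r * x / 2) * (r * x / 2) <= A + B * x)%R by nra.
  nra.
Qed.

Lemma continuity_pt_zero_side (F : R -> R) (s : R) : s <> 0%R ->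
  continuity_pt F 0 -> (forall t, (0 < s * t)%R -> F t = 0%R) -> F 0 = 0%R.
Proof.
  intros Hs HC HZ.
  destruct (Req_dec (F 0) 0) as [E | NE]; [exact E | exfalso].
  destruct (HC (Rabs (F 0)) (Rabs_pos_lt _ NE)) as [alp [Halp H]].
  assert (Hsa : (0 < Rabs s)%R) by (apply Rabs_pos_lt; exact Hs).
  set (t := (s / Rabs s * (alp / 2))%R).
  assert (Ht1 : (0 < s * t)%R).
  { unfold t; replace (s * (s / Rabs s * (alp / 2)))%R with (s * s / Rabs s * (alp / 2))%R
      by (field; lra).
    apply Rmult_lt_0_compat; [apply Rdiv_lt_0_compat; [nra | exact Hsa] | lra]. }
  assert (Ht2 : Rabs t = (alp / 2)%R).
  { unfold t; rewrite Rabs_mult, Rabs_div by lra; rewrite Rabs_Rabsolu.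
    rewrite (Rabs_right (alp / 2)) by lra; field; lra. }
  assert (Ht0 : t <> 0%R) by (intros E; rewrite E in Ht1; lra).
  specialize (H t); simpl in H; unfold R_dist, D_x, no_cond in H.
  rewrite HZ, Rminus_0_r, Rminus_0_l, Rabs_Ropp in H by exact Ht1.
  enough (Rabs (F 0) < Rabs (F 0))%R by lra.
  apply H; repeat split; [auto | lra].
Qed.

Lemma ex_cderive_zero_side (h : R -> C) (s : R) : s <> 0%R ->
  ex_cderive h 0 -> (forall t, (0 < s * t)%R -> h t = 0) -> h 0 = 0.
Proof.
  intros Hs [[l1 H1] [l2 H2]] HZ.
  apply is_derive_Reals in H1, H2.
  apply injective_projections; simpl.
  - apply (continuity_pt_zero_side (fun t => Re (h t)) s Hs).
    + apply derivable_continuous_pt; eexists; exact H1.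
    + intros t Ht; rewrite HZ by exact Ht; reflexivity.
  - apply (continuity_pt_zero_side (fun t => Im (h t)) s Hs).
    + apply derivable_continuous_pt; eexists; exact H2.
    + intros t Ht; rewrite HZ by exact Ht; reflexivity.
Qed.

Lemma dn1_zero_side (F : R -> C) (s x : R) : (0 < s * x)%R ->
  (forall t, (0 < s * t)%R -> F t = 0) -> dn 1 F x = 0.
Proof.
  intros Hx HZ.
  assert (Near : locally x (fun t => 0 < s * t)%R).
  { assert (Hsx : (0 < Rabs (s * x))%R) by (rewrite Rabs_right; lra).
    assert (Hs : (0 < Rabs s)%R) by (apply Rabs_pos_lt; intros ->; lra).
    exists (mkposreal _ (Rdiv_lt_0_compat _ _ Hsx Hs)); intros t Ht.
    change (Rabs (t - x) < Rabs (s * x) / Rabs s)%R in Ht.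
    apply Rmult_lt_compat_r with (r := Rabs s) in Ht; [| exact Hs].
    replace (Rabs (s * x) / Rabs s * Rabs s)%R with (Rabs (s * x)) in Ht by (field; lra).
    rewrite <- Rabs_mult, (Rabs_right (s * x)) in Ht by lra.
    pose proof (Rle_abs (- ((t - x) * s))); rewrite Rabs_Ropp in *; nra. }
  assert (Zero : forall G : R -> R, (forall t, (0 < s * t)%R -> G t = 0%R) -> Derive G x = 0%R).
  { intros G HG; rewrite (Derive_ext_loc _ (fun _ => 0%R)); [apply Derive_const |].
    eapply filter_imp; [| exact Near]; intros t Ht; exact (HG t Ht). }
  unfold dn; simpl.
  rewrite (Zero (fun t => Re (F t))), (Zero (fun t => Im (F t))); [reflexivity | |];
    intros t Ht; rewrite HZ by exact Ht; reflexivity.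
Qed.

(** * Bounded solutions of a third-order equation on a half-line *)

Definition derivable3 (f : R -> C) : Prop :=
  forall t, ex_cderive f t /\ ex_cderive (dn 1 f) t /\ ex_cderive (dn 2 f) t.

Lemma C3_derivable3 f : C3 f -> derivable3 f.
Proof.
  intros H t.
  destruct (H t 1%nat ltac:(lia)), (H t 2%nat ltac:(lia)), (H t 3%nat ltac:(lia)).
  repeat split; assumption.
Qed.

(* Convertible, but checking the conversion unfolds [Derive] and is very slow;
   rewrite with these instead. *)
Lemma dn_1_1 f x : dn 1 (dn 1 f) x = dn 2 f x.
Proof. reflexivity. Qed.

Lemma dn_1_2 f x : dn 1 (dn 2 f) x = dn 3 f x.
Proof. reflexivity. Qed.

Definition dcomb (a0 a1 a2 a3 : C) (E : R -> C) (t : R) : C :=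
  a0 * E t + a1 * dn 1 E t + a2 * dn 2 E t + a3 * dn 3 E t.

Lemma is_cderive_dcomb E a0 a1 a2 t : derivable3 E ->
  is_cderive (dcomb a0 a1 a2 0 E) t (dcomb 0 a0 a1 a2 E t).
Proof.
  intros H; destruct (H t) as [H0 [H1 H2]].
  apply ex_cderive_dn1 in H0, H1, H2.
  rewrite dn_1_1 in H1; rewrite dn_1_2 in H2.
  eapply is_cderive_ext; [| eapply is_cderive_eq; [
    exact (is_cderive_plus _ _ _ _ _
      (is_cderive_plus _ _ _ _ _ (is_cderive_scal a0 _ _ _ H0) (is_cderive_scal a1 _ _ _ H1))
      (is_cderive_plus _ _ _ _ _ (is_cderive_scal a2 _ _ _ H2) (is_cderive_const 0 t))) |]].
  - intros s; unfold dcomb; ring.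
  - unfold dcomb; ring.
Qed.

Lemma ex_cderive_dcomb E a0 a1 a2 t : derivable3 E -> ex_cderive (dcomb a0 a1 a2 0 E) t.
Proof. intros H; eapply is_cderive_ex, is_cderive_dcomb, H. Qed.

Lemma dsub_ext c F G x : (forall t, F t = G t) -> dsub c F x = dsub c G x.
Proof. intros E; unfold dsub; rewrite (dn_ext F G 1 x E), E; reflexivity. Qed.

Lemma dsub_dcomb E c a0 a1 a2 t : derivable3 E ->
  dsub c (dcomb a0 a1 a2 0 E) t = dcomb (- c * a0) (a0 - c * a1) (a1 - c * a2) a2 E t.
Proof.
  intros H; unfold dsub; rewrite (is_cderive_dn1 _ _ _ (is_cderive_dcomb E a0 a1 a2 t H)).
  unfold dcomb; ring.
Qed.

Lemma dsub1_dcomb E c t : dsub c E t = dcomb (- c) 1 0 0 E t.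
Proof. unfold dsub, dcomb; ring. Qed.

Lemma dsub2_dcomb E b c t : derivable3 E ->
  dsub b (dsub c E) t = dcomb (b * c) (- (b + c)) 1 0 E t.
Proof.
  intros H; rewrite (dsub_ext b _ _ _ (dsub1_dcomb E c)), dsub_dcomb by exact H.
  unfold dcomb; ring.
Qed.

Lemma dsub3_dcomb E a b c t : derivable3 E ->
  dsub a (dsub b (dsub c E)) t =
  dcomb (- (a * b * c)) (a * b + b * c + c * a) (- (a + b + c)) 1 E t.
Proof.
  intros H; rewrite (dsub_ext a _ _ _ (fun s => dsub2_dcomb E b c s H)), dsub_dcomb by exact H.
  unfold dcomb; ring.
Qed.

Lemma ex_cderive_dsub1 E c t : derivable3 E -> ex_cderive (dsub c E) t.
Proof.
  intros H; eapply ex_cderive_ext; [intros s; symmetry; apply dsub1_dcomb |].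
  apply ex_cderive_dcomb, H.
Qed.

Lemma ex_cderive_dsub2 E b c t : derivable3 E -> ex_cderive (dsub b (dsub c E)) t.
Proof.
  intros H; eapply ex_cderive_ext; [intros s; symmetry; apply dsub2_dcomb, H |].
  apply ex_cderive_dcomb, H.
Qed.

Lemma dsub2_comm E b c t : derivable3 E -> dsub b (dsub c E) t = dsub c (dsub b E) t.
Proof. intros H; rewrite !dsub2_dcomb by exact H; unfold dcomb; ring. Qed.

Lemma dsub3_comm E a b c t : derivable3 E ->
  dsub b (dsub c (dsub a E)) t = dsub a (dsub b (dsub c E)) t.
Proof. intros H; rewrite !dsub3_dcomb by exact H; unfold dcomb; ring. Qed.

Lemma dn1_minus F G s : ex_cderive F s -> ex_cderive G s ->
  dn 1 (fun t => F t - G t) s = dn 1 F s - dn 1 G s.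
Proof.
  intros HF HG; apply is_cderive_dn1, is_cderive_minus; apply ex_cderive_dn1; assumption.
Qed.

Lemma bounded_on_minus D f g : bounded_on D f -> bounded_on (fun _ => True) g ->
  bounded_on D (fun s => f s - g s).
Proof.
  intros [M1 H1] [M2 H2]; exists (M1 + M2)%R; intros x Hx.
  eapply Rle_trans; [apply Cmod_triangle |]; rewrite Cmod_opp.
  pose proof (H1 x Hx); pose proof (H2 x I); lra.
Qed.

Section Difference.
Variables f g : R -> C.
Hypotheses (Hf : derivable3 f) (Hg : derivable3 g).

Let d t := f t - g t.

Lemma dn_difference s :
  dn 1 d s = dn 1 f s - dn 1 g s /\ dn 2 d s = dn 2 f s - dn 2 g s /\
  dn 3 d s = dn 3 f s - dn 3 g s.
Proof.
  assert (D1 : forall s, dn 1 d s = dn 1 f s - dn 1 g s)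
    by (intros u; apply dn1_minus; [apply Hf | apply Hg]).
  assert (D2 : forall s, dn 2 d s = dn 2 f s - dn 2 g s).
  { intros u; rewrite <- !dn_1_1, (dn_ext _ _ 1 u D1).
    apply dn1_minus; [apply Hf | apply Hg]. }
  repeat split; [apply D1 | apply D2 |].
  rewrite <- !dn_1_2, (dn_ext _ _ 1 s D2); apply dn1_minus; [apply Hf | apply Hg].
Qed.

Lemma derivable3_minus : derivable3 d.
Proof.
  assert (Minus : forall F G t, ex_cderive F t -> ex_cderive G t ->
            ex_cderive (fun s => F s - G s) t).
  { intros F G t HF HG; eapply is_cderive_ex, is_cderive_minus; apply ex_cderive_dn1;
      eassumption. }
  intros t; split; [| split].
  - apply Minus; [apply Hf | apply Hg].
  - eapply ex_cderive_ext; [intros s; symmetry; apply (proj1 (dn_difference s)) |].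
    apply Minus; [apply Hf | apply Hg].
  - eapply ex_cderive_ext; [intros s; symmetry; apply (proj1 (proj2 (dn_difference s))) |].
    apply Minus; [apply Hf | apply Hg].
Qed.

Lemma dcomb_minus a0 a1 a2 a3 s :
  dcomb a0 a1 a2 a3 d s = dcomb a0 a1 a2 a3 f s - dcomb a0 a1 a2 a3 g s.
Proof.
  destruct (dn_difference s) as [D1 [D2 D3]].
  unfold dcomb; rewrite D1, D2, D3; unfold d; ring.
Qed.

End Difference.

Section ThirdOrderKernel.
Variables (lp m1 m2 : C) (E : R -> C) (dom : R -> Prop).
Hypotheses (HE : derivable3 E) (Hdom : forall x t, dom x -> between x t -> dom t)
  (HP : forall t, dom t -> dsub lp (dsub m1 (dsub m2 E)) t = 0).

Let s := m1 + m2 - lp.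

Lemma dsub_division t :
  (lp - m1) * (lp - m2) * E t = dsub m1 (dsub m2 E) t - dsub s (dsub lp E) t.
Proof. rewrite !dsub2_dcomb by exact HE; unfold dcomb, s; ring. Qed.

Lemma dsub2_kernel_cexp x : dom x ->
  dsub m1 (dsub m2 E) x = dsub m1 (dsub m2 E) 0 * cexp lp x.
Proof.
  intros Hx; apply dsub_zero_cexp; [intros t; apply ex_cderive_dsub2, HE |].
  intros t Ht; exact (HP t (Hdom x t Hx Ht)).
Qed.

Lemma dsub_lp_kernel_cexp a b x :
  (forall t, dom t -> dsub lp (dsub a (dsub b E)) t = 0) -> dom x ->
  dsub b (dsub lp E) x = dsub b (dsub lp E) 0 * cexp a x.
Proof.
  intros Hab Hx; apply dsub_zero_cexp; [intros t; apply ex_cderive_dsub2, HE |].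
  intros t Ht; rewrite dsub3_comm by exact HE; exact (Hab t (Hdom x t Hx Ht)).
Qed.

Lemma kernel_distinct_repr : m1 <> m2 -> lp <> m1 -> lp <> m2 ->
  exists p q, forall x, dom x ->
    dsub lp E x = p / (lp - m2) * cexp m1 x + q / (lp - m1) * cexp m2 x /\
    dsub s (dsub lp E) x = p * cexp m1 x + q * cexp m2 x.
Proof.
  intros H12 H1 H2.
  apply Cminus_neq_0 in H12, H1, H2.
  set (A := dsub m2 (dsub lp E) 0); set (B := dsub m1 (dsub lp E) 0).
  exists (A * (lp - m2) / (m1 - m2)), (- B * (lp - m1) / (m1 - m2)); intros x Hx.
  assert (U1 : dsub m2 (dsub lp E) x = A * cexp m1 x)
    by exact (dsub_lp_kernel_cexp m1 m2 x HP Hx).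
  assert (U2 : dsub m1 (dsub lp E) x = B * cexp m2 x).
  { apply dsub_lp_kernel_cexp; [| exact Hx].
    intros t Ht; rewrite <- (HP t Ht), !dsub3_dcomb by exact HE; unfold dcomb; ring. }
  assert (Z : dsub lp E x = (A * cexp m1 x - B * cexp m2 x) / (m1 - m2)).
  { rewrite <- U1, <- U2; unfold dsub; field; exact H12. }
  split.
  - rewrite Z; field; auto.
  - transitivity (dsub m2 (dsub lp E) x + (lp - m1) * dsub lp E x); [unfold dsub, s; ring |].
    rewrite U1, Z; field; exact H12.
Qed.

Lemma kernel_double_repr : m1 = m2 ->
  exists z0 c, forall x, dom x ->
    dsub lp E x = (z0 + c * x) * cexp m1 x /\
    dsub s (dsub lp E) x = ((lp - m1) * z0 + c + (lp - m1) * c * x) * cexp m1 x.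
Proof.
  intros <-; set (c := dsub m1 (dsub lp E) 0).
  exists (dsub lp E 0), c; intros x Hx.
  assert (U : forall t, dom t -> dsub m1 (dsub lp E) t = c * cexp m1 t)
    by (intros t Ht; exact (dsub_lp_kernel_cexp m1 m1 t HP Ht)).
  assert (Z : dsub lp E x = (dsub lp E 0 + c * x) * cexp m1 x).
  { apply dsub_cexp_affine; [intros t; apply ex_cderive_dsub1, HE |].
    intros t Ht; exact (U t (Hdom x t Hx Ht)). }
  split; [exact Z |].
  transitivity (dsub m1 (dsub lp E) x + (lp - m1) * dsub lp E x); [unfold dsub, s; ring |].
  rewrite U, Z by exact Hx; ring.
Qed.

End ThirdOrderKernel.

Section HalfLineKernel.
Variables (lp m1 m2 : C) (E : R -> C).
Hypotheses (HE : derivable3 E) (Hlp : (0 < Re lp)%R) (Hm1 : (Re m1 < 0)%R)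
  (Hm2 : (Re m2 < 0)%R) (Hlp1 : lp <> m1) (Hlp2 : lp <> m2).

Let s := m1 + m2 - lp.
Let K := (lp - m1) * (lp - m2).

(* [(d/dx - s) (d/dx - lp) E = Y0 e^{lp x} - K E] is bounded on [x < 0], but it is a
   combination of the modes [e^{m1 x}], [e^{m2 x}] (or [x e^{m1 x}]) whose coefficients
   also determine [(d/dx - lp) E]; boundedness forces them to vanish. *)
Lemma bounded_kernel_left : bounded_on Omega1 E ->
  (forall t, (t < 0)%R -> dsub lp (dsub m1 (dsub m2 E)) t = 0) ->
  forall x, (x < 0)%R -> dsub lp E x = 0.
Proof.
  intros [M HM] HP.
  assert (H1 := Cminus_neq_0 _ _ Hlp1); assert (H2 := Cminus_neq_0 _ _ Hlp2).
  set (Y0 := dsub m1 (dsub m2 E) 0).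
  assert (Bnd : forall x, (x < 0)%R ->
            (Cmod (dsub s (dsub lp E) x) <= Cmod Y0 + Cmod K * M)%R).
  { intros x Hx.
    replace (dsub s (dsub lp E) x) with (dsub m1 (dsub m2 E) x - K * E x)
      by (unfold K, s; rewrite (dsub_division lp m1 m2 E HE x); ring).
    rewrite (dsub2_kernel_cexp lp m1 m2 E _ HE between_left HP x Hx); fold Y0.
    eapply Rle_trans; [apply Cmod_triangle |]; rewrite Cmod_opp, !Cmod_mult.
    assert (Cmod (cexp lp x) <= 1)%R by (apply Cmod_cexp_le_1; nra).
    apply Rplus_le_compat; [rewrite <- (Rmult_1_r (Cmod Y0)) at 2 |];
      apply Rmult_le_compat_l; auto using Cmod_ge_0. }
  destruct (Ceq_dec m1 m2) as [Heq | Hne].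
  - destruct (kernel_double_repr lp m1 m2 E _ HE between_left HP Heq) as [z0 [c HR]].
    destruct (affine_cexp_bounded_left m1 ((lp - m1) * z0 + c) ((lp - m1) * c)
                (Cmod Y0 + Cmod K * M) Hm1) as [P1 P2].
    { intros x Hx; rewrite <- (proj2 (HR x Hx)); apply Bnd, Hx. }
    assert (Hc : c = 0) by (apply (Cmult_eq_0_l c (lp - m1)); [rewrite <- P2 |]; auto; ring).
    subst c.
    assert (Hz : z0 = 0) by (apply (Cmult_eq_0_l z0 (lp - m1)); [rewrite <- P1 |]; auto; ring).
    intros x Hx; rewrite (proj1 (HR x Hx)), Hz; ring.
  - destruct (kernel_distinct_repr lp m1 m2 E _ HE between_left HP Hne Hlp1 Hlp2)
      as [p [q HR]].
    destruct (cexp2_bounded_left m1 m2 p q (Cmod Y0 + Cmod K * M) Hne Hm1 Hm2) as [-> ->].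
    { intros x Hx; rewrite <- (proj2 (HR x Hx)); apply Bnd, Hx. }
    intros x Hx; rewrite (proj1 (HR x Hx)); field; auto.
Qed.

Lemma kernel_linear_growth_right :
  (forall t, (0 < t)%R -> dsub lp (dsub m1 (dsub m2 E)) t = 0) ->
  exists A B, forall x, (0 < x)%R -> (Cmod (dsub s (dsub lp E) x) <= A + B * x)%R.
Proof.
  intros HP.
  destruct (Ceq_dec m1 m2) as [Heq | Hne].
  - destruct (kernel_double_repr lp m1 m2 E _ HE between_right HP Heq) as [z0 [c HR]].
    exists (Cmod ((lp - m1) * z0 + c)), (Cmod ((lp - m1) * c)); intros x Hx.
    unfold s; rewrite (proj2 (HR x Hx)), Cmod_mult.
    assert (Cmod (cexp m1 x) <= 1)%R by (apply Cmod_cexp_le_1; nra).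
    assert (Cmod ((lp - m1) * z0 + c + (lp - m1) * c * x) <=
            Cmod ((lp - m1) * z0 + c) + Cmod ((lp - m1) * c) * x)%R.
    { eapply Rle_trans; [apply Cmod_triangle |].
      rewrite (Cmod_mult _ (RtoC x)), Cmod_R, Rabs_right by lra; lra. }
    pose proof (Cmod_ge_0 ((lp - m1) * z0 + c + (lp - m1) * c * x)).
    pose proof (Cmod_ge_0 ((lp - m1) * z0 + c)); pose proof (Cmod_ge_0 ((lp - m1) * c)).
    nra.
  - destruct (kernel_distinct_repr lp m1 m2 E _ HE between_right HP Hne Hlp1 Hlp2)
      as [p [q HR]].
    exists (Cmod p + Cmod q)%R, 0%R; intros x Hx.
    unfold s; rewrite (proj2 (HR x Hx)).
    eapply Rle_trans; [apply Cmod_triangle |]; rewrite !Cmod_mult.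
    assert (Cmod (cexp m1 x) <= 1)%R by (apply Cmod_cexp_le_1; nra).
    assert (Cmod (cexp m2 x) <= 1)%R by (apply Cmod_cexp_le_1; nra).
    pose proof (Cmod_ge_0 p); pose proof (Cmod_ge_0 q); nra.
Qed.

(* [Y0 e^{lp x} = (d/dx - m1) (d/dx - m2) E = K E + (d/dx - s) (d/dx - lp) E] grows at most
   linearly on [x > 0], so [Y0 = 0]. *)
Lemma bounded_kernel_right : bounded_on Omega2 E ->
  (forall t, (0 < t)%R -> dsub lp (dsub m1 (dsub m2 E)) t = 0) ->
  forall x, (0 < x)%R -> dsub m1 (dsub m2 E) x = 0.
Proof.
  intros [M HM] HP.
  destruct kernel_linear_growth_right as [A [B HAB]]; [exact HP |].
  set (Y0 := dsub m1 (dsub m2 E) 0).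
  assert (Hy : forall x, (0 < x)%R -> dsub m1 (dsub m2 E) x = Y0 * cexp lp x)
    by exact (dsub2_kernel_cexp lp m1 m2 E _ HE between_right HP).
  enough (Y0 = 0) by (intros x Hx; rewrite Hy, H by exact Hx; ring).
  apply (cexp_linear_bound_right lp Y0 (Cmod K * M + A) B Hlp); intros x Hx.
  rewrite <- Hy by exact Hx.
  replace (dsub m1 (dsub m2 E) x) with (K * E x + dsub s (dsub lp E) x)
    by (unfold K, s; rewrite (dsub_division lp m1 m2 E HE x); ring).
  eapply Rle_trans; [apply Cmod_triangle |]; rewrite Cmod_mult.
  pose proof (Cmod_ge_0 K); pose proof (HM x Hx); pose proof (HAB x Hx); nra.
Qed.

End HalfLineKernel.

(** * The operators [G] and [L G] *)

Section Roots.
Variables (beta cb ub vb xi : R).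
Hypotheses (Hbeta : (0 < beta)%R) (Hub0 : (0 < ub)%R) (Hubc : (ub < cb)%R).

(* With [zeta = beta + i vb xi], the symbol of [L] in [d/dx] is
   [- kappa X^2 + 2 ub zeta X + zeta^2 + cb^2 xi^2], whose roots are
   [lambda_pm = (ub zeta +- cb sqrt (zeta^2 + kappa xi^2)) / kappa];
   [(sqrt_re, sqrt_im)] is the principal square root of
   [zeta^2 + kappa xi^2 = (disc_re, disc_im)].  The symbol of [G] is
   [ub (X - lambda0)]. *)
Definition kappa : R := (cb ^ 2 - ub ^ 2)%R.
Definition zeta : C := (beta, vb * xi)%R.
Definition disc_re : R := (beta ^ 2 - (vb * xi) ^ 2 + kappa * xi ^ 2)%R.
Definition disc_im : R := (2 * beta * (vb * xi))%R.
Definition sqrt_re : R := sqrt ((sqrt (disc_re ^ 2 + disc_im ^ 2) + disc_re) / 2)%R.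
Definition sqrt_im : R := (disc_im / (2 * sqrt_re))%R.
Definition lambda_p : C :=
  ((ub * beta + cb * sqrt_re) / kappa, (ub * (vb * xi) + cb * sqrt_im) / kappa)%R.
Definition lambda_m : C :=
  ((ub * beta - cb * sqrt_re) / kappa, (ub * (vb * xi) - cb * sqrt_im) / kappa)%R.
Definition lambda0 : C := (- beta / ub, - (vb * xi) / ub)%R.

Lemma kappa_pos : (0 < kappa)%R.
Proof. unfold kappa; nra. Qed.

Lemma sqrt_re_ge : (beta <= sqrt_re)%R.
Proof.
  unfold sqrt_re; rewrite <- (sqrt_square beta) by lra; apply sqrt_le_1_alt.
  assert (0 <= kappa * xi ^ 2)%R by (pose proof kappa_pos; nra).
  enough (2 * beta * beta - disc_re <= sqrt (disc_re ^ 2 + disc_im ^ 2))%R by lra.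
  destruct (Rle_or_lt (2 * beta * beta - disc_re) 0).
  - pose proof (sqrt_pos (disc_re ^ 2 + disc_im ^ 2)); lra.
  - rewrite <- (sqrt_square (2 * beta * beta - disc_re)) by lra.
    apply sqrt_le_1_alt; unfold disc_re, disc_im; nra.
Qed.

Lemma sqrt_re_pos : (0 < sqrt_re)%R.
Proof. pose proof sqrt_re_ge; lra. Qed.

Lemma sqrt_re_im_sq :
  (sqrt_re * sqrt_re - sqrt_im * sqrt_im = disc_re /\ 2 * sqrt_re * sqrt_im = disc_im)%R.
Proof.
  pose proof sqrt_re_pos as Hr.
  set (S := sqrt (disc_re ^ 2 + disc_im ^ 2)).
  assert (HS : (S * S = disc_re ^ 2 + disc_im ^ 2)%R) by (apply sqrt_sqrt; nra).
  assert (Habs : (Rabs disc_re <= S)%R).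
  { rewrite <- sqrt_Rsqr_abs; apply sqrt_le_1_alt; unfold Rsqr; nra. }
  assert (Hrr : (sqrt_re * sqrt_re = (S + disc_re) / 2)%R).
  { apply sqrt_sqrt; pose proof (Rle_abs (- disc_re)); rewrite Rabs_Ropp in *; lra. }
  unfold sqrt_im; split; [| field; lra].
  replace (sqrt_re * sqrt_re - disc_im / (2 * sqrt_re) * (disc_im / (2 * sqrt_re)))%R
    with ((4 * (sqrt_re * sqrt_re) * (sqrt_re * sqrt_re) - disc_im * disc_im)
          / (4 * (sqrt_re * sqrt_re)))%R by (field; lra).
  assert (HD : (0 < (S + disc_re) / 2)%R) by (rewrite <- Hrr; nra).
  rewrite Hrr; field_simplify_eq; [nra | lra].
Qed.

Lemma Re_lambda_p : (0 < Re lambda_p)%R.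
Proof.
  unfold lambda_p; simpl; pose proof kappa_pos; pose proof sqrt_re_pos.
  apply Rdiv_lt_0_compat; nra.
Qed.

Lemma Re_lambda_m : (Re lambda_m < 0)%R.
Proof.
  unfold lambda_m; simpl; pose proof kappa_pos; pose proof sqrt_re_ge.
  apply Rdiv_neg_pos; nra.
Qed.

Lemma Re_lambda0 : (Re lambda0 < 0)%R.
Proof. unfold lambda0; simpl; apply Rdiv_neg_pos; lra. Qed.

Lemma lambda_p_neq_m : lambda_p <> lambda_m.
Proof. intros E; pose proof Re_lambda_p; pose proof Re_lambda_m; rewrite E in *; lra. Qed.

Lemma lambda_p_neq_0 : lambda_p <> lambda0.
Proof. intros E; pose proof Re_lambda_p; pose proof Re_lambda0; rewrite E in *; lra. Qed.

Lemma lambda_sum :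
  lambda_p + lambda_m = ((2 * ub * beta) / kappa, (2 * ub * (vb * xi)) / kappa)%R.
Proof.
  pose proof kappa_pos; unfold lambda_p, lambda_m.
  apply injective_projections; simpl; field; lra.
Qed.

Lemma lambda_prod : lambda_p * lambda_m =
  (- (beta ^ 2 - (vb * xi) ^ 2 + cb ^ 2 * xi ^ 2) / kappa, - (2 * beta * (vb * xi)) / kappa)%R.
Proof.
  pose proof kappa_pos; destruct sqrt_re_im_sq as [S1 S2].
  unfold lambda_p, lambda_m; apply injective_projections; simpl.
  - transitivity ((ub ^ 2 * (beta ^ 2 - (vb * xi) ^ 2)
                   - cb ^ 2 * (sqrt_re * sqrt_re - sqrt_im * sqrt_im)) / (kappa * kappa))%R;
      [field; lra |].
    rewrite S1; unfold disc_re, kappa in *; field; nra.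
  - transitivity ((ub ^ 2 * (2 * beta * (vb * xi))
                   - cb ^ 2 * (2 * sqrt_re * sqrt_im)) / (kappa * kappa))%R; [field; lra |].
    rewrite S2; unfold disc_im, kappa in *; field; nra.
Qed.

Lemma Gop_dcomb f t : Gop beta ub vb xi f t = dcomb zeta ub 0 0 f t.
Proof.
  unfold Gop, dcomb, iy, zeta.
  destruct (f t), (dn 1 f t), (dn 2 f t), (dn 3 f t).
  apply injective_projections; simpl; ring.
Qed.

Lemma dn1_Gop f t : derivable3 f -> dn 1 (Gop beta ub vb xi f) t = dcomb 0 zeta ub 0 f t.
Proof.
  intros H; rewrite (dn_ext _ _ 1 t (Gop_dcomb f)).
  exact (is_cderive_dn1 _ _ _ (is_cderive_dcomb f zeta ub 0 t H)).
Qed.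

Lemma dn2_Gop f t : derivable3 f -> dn 2 (Gop beta ub vb xi f) t = dcomb 0 0 zeta ub f t.
Proof.
  intros H; rewrite <- dn_1_1, (dn_ext _ _ 1 t (fun s => dn1_Gop f s H)).
  exact (is_cderive_dn1 _ _ _ (is_cderive_dcomb f 0 zeta ub t H)).
Qed.

Lemma LGop_factor f t : derivable3 f ->
  LGop beta cb ub vb xi f t = - (kappa * ub)%R * dsub lambda_p (dsub lambda_m (dsub lambda0 f)) t.
Proof.
  intros H; unfold LGop, Lop; rewrite dn1_Gop, dn2_Gop, Gop_dcomb, dsub3_dcomb by exact H.
  replace (lambda_p * lambda_m + lambda_m * lambda0 + lambda0 * lambda_p)
    with (lambda_p * lambda_m + lambda0 * (lambda_p + lambda_m)) by ring.
  rewrite lambda_prod, lambda_sum.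
  pose proof kappa_pos.
  unfold dcomb, lambda0, zeta, iy, kappa in *.
  destruct (f t), (dn 1 f t), (dn 2 f t), (dn 3 f t).
  apply injective_projections; simpl; field; split; nra.
Qed.

End Roots.

Section HalfLineSolutions.
Variables (beta cb ub vb xi : R).
Hypotheses (Hbeta : (0 < beta)%R) (Hub0 : (0 < ub)%R) (Hubc : (ub < cb)%R).

Local Notation G := (Gop beta ub vb xi).
Local Notation LG := (LGop beta cb ub vb xi).
Local Notation lp := (lambda_p beta cb ub vb xi).
Local Notation lm := (lambda_m beta cb ub vb xi).
Local Notation l0 := (lambda0 beta ub vb xi).

Definition left_solution (h : R -> C) : Prop :=
  derivable3 h /\ bounded_on Omega1 h /\ forall x, Omega1 x -> LG h x = 0.

Definition right_solution (h : R -> C) : Prop :=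
  derivable3 h /\ bounded_on Omega2 h /\ forall x, Omega2 x -> LG h x = 0.

Lemma LGop_zero_dsub3 h t : derivable3 h -> LG h t = 0 -> dsub lp (dsub lm (dsub l0 h)) t = 0.
Proof.
  intros H E; rewrite LGop_factor in E by auto.
  apply (Cmult_eq_0_l _ (- (kappa cb ub * ub)%R)); [rewrite Cmult_comm; exact E |].
  intros E0; apply (f_equal fst) in E0; simpl in E0.
  pose proof (kappa_pos cb ub Hub0 Hubc); nra.
Qed.

Lemma Gop_dsub h t : G h t = ub * dsub l0 h t.
Proof.
  rewrite Gop_dcomb, dsub1_dcomb; unfold dcomb, zeta, lambda0.
  destruct (h t), (dn 1 h t), (dn 2 h t), (dn 3 h t).
  apply injective_projections; simpl; field; lra.
Qed.

Lemma dsub_Gop h c t : derivable3 h -> dsub c (G h) t = ub * dsub c (dsub l0 h) t.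
Proof.
  intros H; rewrite (dsub_ext c _ (dcomb (ub * - l0) ub 0 0 h)).
  - rewrite dsub_dcomb, dsub2_dcomb by exact H; unfold dcomb; ring.
  - intros s; rewrite Gop_dsub, dsub1_dcomb; unfold dcomb; ring.
Qed.

Lemma ub_neq_0 : RtoC ub <> 0.
Proof. intros E; apply (f_equal fst) in E; simpl in E; lra. Qed.

Section Left.
Variable h : R -> C.
Hypothesis Hh : left_solution h.

Lemma left_solution_dsub x : (x < 0)%R -> dsub lp h x = 0.
Proof.
  destruct Hh as [HD [HB HL]].
  apply (bounded_kernel_left lp lm l0 h HD); auto using Re_lambda_p, Re_lambda_m, Re_lambda0,
    lambda_p_neq_m, lambda_p_neq_0.
  intros t Ht; apply LGop_zero_dsub3, HL; [exact HD | exact Ht].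
Qed.

Lemma left_solution_exp x : (x < 0)%R -> h x = h 0 * cexp lp x.
Proof.
  intros Hx; apply dsub_zero_cexp; [intros t; apply Hh |].
  intros t Ht; apply left_solution_dsub, (between_left x t Hx Ht).
Qed.

Lemma left_solution_G_0 : G h 0 = ub * (lp - l0) * h 0.
Proof.
  assert (Z : dsub lp h 0 = 0).
  { apply (ex_cderive_zero_side _ (-1)); [lra | apply ex_cderive_dsub1, Hh |].
    intros t Ht; apply left_solution_dsub; lra. }
  rewrite Gop_dsub; unfold dsub in *.
  replace (dn 1 h 0) with (dn 1 h 0 - lp * h 0 + lp * h 0) by ring; rewrite Z; ring.
Qed.

Lemma left_solution_dn1_Gop : dn 1 (G h) 0 = lp * G h 0.
Proof.
  destruct Hh as [HD _].
  assert (Z : dsub lp (dsub l0 h) 0 = 0).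
  { assert (Z1 : forall u, (0 < -1 * u)%R -> dsub lp h u = 0)
      by (intros u Hu; apply left_solution_dsub; lra).
    apply (ex_cderive_zero_side _ (-1)); [lra | apply ex_cderive_dsub2, HD |].
    intros t Ht; rewrite dsub2_comm by exact HD; unfold dsub at 1.
    rewrite (dn1_zero_side _ (-1) t Ht Z1), (Z1 t Ht); ring. }
  transitivity (lp * G h 0 + dsub lp (G h) 0); [unfold dsub; ring |].
  rewrite dsub_Gop, Z by exact HD; ring.
Qed.

End Left.

Section Right.
Variable h : R -> C.
Hypothesis Hh : right_solution h.

Lemma right_solution_dsub2 x : (0 < x)%R -> dsub lm (dsub l0 h) x = 0.
Proof.
  destruct Hh as [HD [HB HL]].
  apply (bounded_kernel_right lp lm l0 h HD); auto using Re_lambda_p, Re_lambda_m, Re_lambda0,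
    lambda_p_neq_m, lambda_p_neq_0.
  intros t Ht; apply LGop_zero_dsub3, HL; [exact HD | exact Ht].
Qed.

Lemma right_solution_dn1_Gop : dn 1 (G h) 0 = lm * G h 0.
Proof.
  destruct Hh as [HD _].
  assert (Z : dsub lm (dsub l0 h) 0 = 0).
  { apply (ex_cderive_zero_side _ 1); [lra | apply ex_cderive_dsub2, HD |].
    intros t Ht; apply right_solution_dsub2; lra. }
  transitivity (lm * G h 0 + dsub lm (G h) 0); [unfold dsub; ring |].
  rewrite dsub_Gop, Z by exact HD; ring.
Qed.

Lemma right_solution_unique : G h 0 = 0 -> h 0 = 0 -> forall x, (0 < x)%R -> h x = 0.
Proof.
  intros HG H0 x Hx; destruct Hh as [HD _].
  assert (U0 : dsub l0 h 0 = 0).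
  { rewrite Gop_dsub in HG; apply (Cmult_eq_0_l _ ub); [rewrite Cmult_comm; exact HG |].
    exact ub_neq_0. }
  assert (U : forall y, (0 < y)%R -> dsub l0 h y = 0).
  { intros y Hy; rewrite (dsub_zero_cexp _ lm y), U0; [ring | |].
    - intros t; apply ex_cderive_dsub1, HD.
    - intros t Ht; apply right_solution_dsub2, (between_right y t Hy Ht). }
  rewrite (dsub_zero_cexp h l0 x), H0; [ring | intros t; apply HD |].
  intros t Ht; apply U, (between_right x t Hx Ht).
Qed.

End Right.

End HalfLineSolutions.

(** * The two sweeps *)

Section Interface.
Variables (beta cb ub vb xi : R).
Hypotheses (Hbeta : (0 < beta)%R) (Hub0 : (0 < ub)%R) (Hubc : (ub < cb)%R).

Local Notation G := (Gop beta ub vb xi).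
Local Notation LG := (LGop beta cb ub vb xi).
Local Notation lp := (lambda_p beta cb ub vb xi).
Local Notation lm := (lambda_m beta cb ub vb xi).
Local Notation l0 := (lambda0 beta ub vb xi).
Local Notation left_solution := (left_solution beta cb ub vb xi).
Local Notation right_solution := (right_solution beta cb ub vb xi).

Lemma Gop_minus f g t : derivable3 f -> derivable3 g ->
  G (fun s => f s - g s) t = G f t - G g t.
Proof. intros Hf Hg; rewrite !Gop_dcomb; apply dcomb_minus; assumption. Qed.

Lemma dn1_Gop_minus f g t : derivable3 f -> derivable3 g ->
  dn 1 (G (fun s => f s - g s)) t = dn 1 (G f) t - dn 1 (G g) t.
Proof.
  intros Hf Hg; rewrite !dn1_Gop by (auto using derivable3_minus).
  apply dcomb_minus; assumption.
Qed.

Lemma LGop_minus f g t : derivable3 f -> derivable3 g ->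
  LG (fun s => f s - g s) t = LG f t - LG g t.
Proof.
  intros Hf Hg; rewrite !LGop_factor, !dsub3_dcomb by (auto using derivable3_minus).
  rewrite dcomb_minus by assumption; ring.
Qed.

Lemma left_solution_minus f Q g : C3 f -> bounded_on Omega1 f ->
  C3 Q -> bounded_on (fun _ => True) Q ->
  (forall x, Omega1 x -> LG f x = g x) -> (forall x, LG Q x = g x) ->
  left_solution (fun s => f s - Q s).
Proof.
  intros Cf Bf CQ BQ Lf LQ; apply C3_derivable3 in Cf, CQ.
  split; [| split]; [apply derivable3_minus; assumption | apply bounded_on_minus; assumption |].
  intros x Hx; rewrite LGop_minus, Lf, LQ by assumption; ring.
Qed.

Lemma right_solution_minus f Q g : C3 f -> bounded_on Omega2 f ->
  C3 Q -> bounded_on (fun _ => True) Q ->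
  (forall x, Omega2 x -> LG f x = g x) -> (forall x, LG Q x = g x) ->
  right_solution (fun s => f s - Q s).
Proof.
  intros Cf Bf CQ BQ Lf LQ; apply C3_derivable3 in Cf, CQ.
  split; [| split]; [apply derivable3_minus; assumption | apply bounded_on_minus; assumption |].
  intros x Hx; rewrite LGop_minus, Lf, LQ by assumption; ring.
Qed.

Lemma Aflux_n1 w : Aflux cb ub vb xi 1 0 w 0 = kappa cb ub * dn 1 w 0 - (ub * vb)%R * iy xi * w 0.
Proof.
  unfold Aflux, kappa, iy; destruct (dn 1 w 0), (w 0).
  apply injective_projections; simpl; ring.
Qed.

Lemma Aflux_n2 w : Aflux cb ub vb xi (-1) 0 w 0 = - Aflux cb ub vb xi 1 0 w 0.
Proof.
  unfold Aflux; destruct (dn 1 w 0), (w 0).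
  apply injective_projections; simpl; ring.
Qed.

Lemma Bflux_n1 w :
  Bflux beta cb ub vb xi 1 0 w 0 = Aflux cb ub vb xi 1 0 w 0 - (beta * ub)%R * w 0.
Proof.
  unfold Bflux, Aflux; destruct (dn 1 w 0), (w 0).
  apply injective_projections; simpl; field.
Qed.

Lemma Bflux_n2 w :
  Bflux beta cb ub vb xi (-1) 0 w 0 = - Aflux cb ub vb xi 1 0 w 0 + (beta * ub)%R * w 0.
Proof.
  unfold Bflux, Aflux; destruct (dn 1 w 0), (w 0).
  apply injective_projections; simpl; field.
Qed.

Definition alpha : C := kappa cb ub * lp - (ub * vb)%R * iy xi - (beta * ub)%R.

Lemma alpha_right : alpha = - (kappa cb ub * lm - (ub * vb)%R * iy xi) + (beta * ub)%R.
Proof.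
  pose proof (lambda_sum beta cb ub vb xi Hub0 Hubc) as S.
  pose proof (kappa_pos cb ub Hub0 Hubc).
  transitivity (kappa cb ub * (lp + lm) - kappa cb ub * lm - (ub * vb)%R * iy xi
                - (beta * ub)%R); [unfold alpha; ring |].
  rewrite S; unfold iy; destruct lm.
  apply injective_projections; simpl; field; lra.
Qed.

Lemma alpha_double : 2 * alpha = kappa cb ub * (lp - lm).
Proof. transitivity (alpha + alpha); [ring |]; rewrite alpha_right at 2; unfold alpha; ring. Qed.

Lemma alpha_neq_0 : alpha <> 0.
Proof.
  intros E; apply (lambda_p_neq_m beta cb ub vb xi Hbeta Hub0 Hubc).
  assert (Z : (lp - lm) * kappa cb ub = 0) by (rewrite Cmult_comm, <- alpha_double, E; ring).
  apply Cmult_eq_0_l in Z.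
  - replace lp with (lp - lm + lm) by ring; rewrite Z; ring.
  - intros K; apply (f_equal fst) in K; simpl in K.
    pose proof (kappa_pos cb ub Hub0 Hubc); lra.
Qed.

Lemma left_solution_Bflux h : left_solution h ->
  Bflux beta cb ub vb xi 1 0 (G h) 0 = alpha * G h 0.
Proof.
  intros Hh; rewrite Bflux_n1, Aflux_n1, (left_solution_dn1_Gop _ cb _ _ _ Hbeta Hub0 Hubc h Hh).
  unfold alpha; ring.
Qed.

Lemma right_solution_Bflux h : right_solution h ->
  Bflux beta cb ub vb xi (-1) 0 (G h) 0 = alpha * G h 0.
Proof.
  intros Hh; rewrite Bflux_n2, Aflux_n1, (right_solution_dn1_Gop _ cb _ _ _ Hbeta Hub0 Hubc h Hh).
  rewrite alpha_right; ring.
Qed.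

Definition interface_flux (f1 f2 : R -> C) : C :=
  RtoC (- / 2)%R * (Aflux cb ub vb xi 1 0 (G f1) 0 + Aflux cb ub vb xi (-1) 0 (G f2) 0).

Lemma interface_flux_mismatch f1 f2 Q : derivable3 f1 -> derivable3 f2 -> derivable3 Q ->
  left_solution (fun s => f1 s - Q s) -> right_solution (fun s => f2 s - Q s) ->
  G f1 0 = G f2 0 -> interface_flux f1 f2 = - alpha * (G f1 0 - G Q 0).
Proof.
  intros D1 D2 DQ H1 H2 E.
  assert (N1 := left_solution_dn1_Gop _ _ _ _ _ Hbeta Hub0 Hubc _ H1).
  assert (N2 := right_solution_dn1_Gop _ _ _ _ _ Hbeta Hub0 Hubc _ H2).
  rewrite dn1_Gop_minus, Gop_minus in N1, N2 by assumption.
  unfold interface_flux; rewrite Aflux_n2, !Aflux_n1.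
  replace (dn 1 (G f1) 0) with (lp * (G f1 0 - G Q 0) + dn 1 (G Q) 0)
    by (rewrite <- N1; ring).
  replace (dn 1 (G f2) 0) with (lm * (G f1 0 - G Q 0) + dn 1 (G Q) 0)
    by (rewrite E, <- N2; ring).
  rewrite E.
  transitivity (RtoC (- / 2)%R * (kappa cb ub * (lp - lm)) * (G f2 0 - G Q 0)); [ring |].
  assert (Half : RtoC (- / 2)%R * 2 = - 1) by (apply injective_projections; simpl; field).
  rewrite <- alpha_double.
  transitivity (RtoC (- / 2)%R * 2 * alpha * (G f2 0 - G Q 0)); [ring |].
  rewrite Half; ring.
Qed.

Lemma first_sweep f1 f2 Q h1 h2 : derivable3 f1 -> derivable3 f2 -> derivable3 Q ->
  left_solution (fun s => f1 s - Q s) -> right_solution (fun s => f2 s - Q s) ->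
  G f1 0 = G f2 0 -> left_solution h1 -> right_solution h2 ->
  Bflux beta cb ub vb xi 1 0 (G h1) 0 = interface_flux f1 f2 ->
  Bflux beta cb ub vb xi (-1) 0 (G h2) 0 = interface_flux f1 f2 ->
  G h1 0 = G Q 0 - G f1 0 /\ G h2 0 = G Q 0 - G f1 0.
Proof.
  intros D1 D2 DQ E1 E2 E Hh1 Hh2 B1 B2.
  rewrite (interface_flux_mismatch f1 f2 Q) in B1, B2 by assumption.
  rewrite left_solution_Bflux in B1 by exact Hh1.
  rewrite right_solution_Bflux in B2 by exact Hh2.
  split; apply (Cmult_reg_l_neq_0 alpha); auto using alpha_neq_0;
    [rewrite B1 | rewrite B2]; ring.
Qed.

Lemma ub_lambda_gap_neq_0 : ub * (lp - l0) <> 0.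
Proof.
  apply Cmult_neq_0; [exact (ub_neq_0 ub Hub0) |].
  apply Cminus_neq_0, lambda_p_neq_0; assumption.
Qed.

Lemma second_sweep_left f Q : derivable3 f -> derivable3 Q ->
  left_solution (fun s => f s - Q s) -> G f 0 = G Q 0 -> forall x, (x < 0)%R -> f x = Q x.
Proof.
  intros Df DQ He E x Hx.
  assert (Z : f 0 - Q 0 = 0).
  { apply (Cmult_reg_l_neq_0 _ _ _ ub_lambda_gap_neq_0).
    rewrite <- (left_solution_G_0 _ cb _ _ _ Hbeta Hub0 Hubc _ He), Gop_minus, E
      by assumption; ring. }
  assert (Zx := left_solution_exp _ cb _ _ _ Hbeta Hub0 Hubc _ He x Hx); simpl in Zx.
  rewrite Z, Cmult_0_l in Zx.
  replace (f x) with (f x - Q x + Q x) by ring; rewrite Zx; ring.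
Qed.

Lemma second_sweep_right f Q : derivable3 f -> derivable3 Q ->
  right_solution (fun s => f s - Q s) -> G f 0 = G Q 0 -> f 0 = Q 0 ->
  forall x, (0 < x)%R -> f x = Q x.
Proof.
  intros Df DQ He EG E0 x Hx.
  assert (Zx := right_solution_unique _ cb _ _ _ Hbeta Hub0 Hubc _ He); simpl in Zx.
  rewrite Gop_minus, EG, E0 in Zx by assumption.
  replace (f x) with (f x - Q x + Q x) by ring; rewrite Zx by (auto; ring); ring.
Qed.

Lemma trace_after_first_sweep f Q h : derivable3 f -> derivable3 Q ->
  left_solution (fun s => f s - Q s) -> left_solution h -> G h 0 = G Q 0 - G f 0 ->
  f 0 + h 0 = Q 0.
Proof.
  intros Df DQ He Hh E.
  assert (Z : f 0 - Q 0 + h 0 = 0).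
  { apply (Cmult_reg_l_neq_0 _ _ _ ub_lambda_gap_neq_0).
    transitivity (G (fun s => f s - Q s) 0 + G h 0).
    - rewrite (left_solution_G_0 _ cb _ _ _ Hbeta Hub0 Hubc _ He).
      rewrite (left_solution_G_0 _ cb _ _ _ Hbeta Hub0 Hubc _ Hh); ring.
    - rewrite Gop_minus, E by assumption; ring. }
  replace (Q 0) with (Q 0 + (f 0 - Q 0 + h 0)) by (rewrite Z; ring); ring.
Qed.

End Interface.

Close Scope C_scope.

Theorem mainTheorem2 (beta cb ub vb : R)
  (Hbeta : 0 < beta) (Hcb : 0 < cb) (Hub0 : 0 < ub) (Hubc : ub < cb)
  (g : R -> R -> C) (Q : R -> R -> C)
  (Q1 Q2 Qt1 Qt2 : nat -> R -> R -> C)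
  (HQreg : forall xi, C3 (Q xi) /\ bounded_on (fun _ => True) (Q xi))
  (HQeq : forall xi x, LGop beta cb ub vb xi (Q xi) x = g xi x)
  (HQ1reg : forall k xi, (k <= 2)%nat -> C3 (Q1 k xi) /\ bounded_on Omega1 (Q1 k xi))
  (HQ2reg : forall k xi, (k <= 2)%nat -> C3 (Q2 k xi) /\ bounded_on Omega2 (Q2 k xi))
  (HQt1reg : forall k xi, (k <= 1)%nat -> C3 (Qt1 k xi) /\ bounded_on Omega1 (Qt1 k xi))
  (HQt2reg : forall k xi, (k <= 1)%nat -> C3 (Qt2 k xi) /\ bounded_on Omega2 (Qt2 k xi))
  (Hinit : forall xi, Gop beta ub vb xi (Q1 0%nat xi) 0 = Gop beta ub vb xi (Q2 0%nat xi) 0)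
  (Hcorr : forall k xi, (k <= 1)%nat ->
     let gamma := Cmult (RtoC (- / 2))
       (Cplus (Aflux cb ub vb xi 1 0 (Gop beta ub vb xi (Q1 k xi)) 0)
              (Aflux cb ub vb xi (-1) 0 (Gop beta ub vb xi (Q2 k xi)) 0)) in
     (forall x, Omega1 x -> LGop beta cb ub vb xi (Qt1 k xi) x = RtoC 0) /\
     Bflux beta cb ub vb xi 1 0 (Gop beta ub vb xi (Qt1 k xi)) 0 = gamma /\
     (forall x, Omega2 x -> LGop beta cb ub vb xi (Qt2 k xi) x = RtoC 0) /\
     Bflux beta cb ub vb xi (-1) 0 (Gop beta ub vb xi (Qt2 k xi)) 0 = gamma /\
     Qt2 k xi 0 = RtoC 0)
  (Hupd : forall k xi, (k <= 1)%nat ->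
     let delta := Cmult (RtoC (/ 2))
       (Cplus (Gop beta ub vb xi (Qt1 k xi) 0) (Gop beta ub vb xi (Qt2 k xi) 0)) in
     (forall x, Omega1 x -> LGop beta cb ub vb xi (Q1 (S k) xi) x = g xi x) /\
     Gop beta ub vb xi (Q1 (S k) xi) 0 = Cplus (Gop beta ub vb xi (Q1 k xi) 0) delta /\
     (forall x, Omega2 x -> LGop beta cb ub vb xi (Q2 (S k) xi) x = g xi x) /\
     Gop beta ub vb xi (Q2 (S k) xi) 0 = Cplus (Gop beta ub vb xi (Q2 k xi) 0) delta /\
     Q2 (S k) xi 0 = Cplus (Q1 k xi 0) (Qt1 k xi 0)) :
  forall xi x,
    (Omega1 x -> Q1 2%nat xi x = Q xi x) /\ (Omega2 x -> Q2 2%nat xi x = Q xi x).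
Proof.
  intros xi x.
  destruct (HQreg xi) as [CQ BQ]; assert (DQ := C3_derivable3 _ CQ).
  assert (D1 : forall k, (k <= 2)%nat -> derivable3 (Q1 k xi))
    by (intros k Hk; apply C3_derivable3, HQ1reg, Hk).
  assert (D2 : forall k, (k <= 2)%nat -> derivable3 (Q2 k xi))
    by (intros k Hk; apply C3_derivable3, HQ2reg, Hk).
  assert (E1 : forall k, (k <= 1)%nat ->
            left_solution beta cb ub vb xi (fun s => (Q1 (S k) xi s - Q xi s)%C)).
  { intros k Hk; destruct (HQ1reg (S k) xi ltac:(lia)).
    apply (left_solution_minus _ _ _ _ _ Hbeta Hub0 Hubc _ _ (g xi)); auto; apply Hupd, Hk. }
  assert (E2 : forall k, (k <= 1)%nat ->
            right_solution beta cb ub vb xi (fun s => (Q2 (S k) xi s - Q xi s)%C)).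
  { intros k Hk; destruct (HQ2reg (S k) xi ltac:(lia)).
    apply (right_solution_minus _ _ _ _ _ Hbeta Hub0 Hubc _ _ (g xi)); auto; apply Hupd, Hk. }
  destruct (Hupd 0%nat xi ltac:(lia)) as [_ [U1 [_ [U2 _]]]].
  destruct (Hcorr 1%nat xi ltac:(lia)) as [Lt1 [B1 [Lt2 [B2 _]]]].
  destruct (Hupd 1%nat xi ltac:(lia)) as [_ [V1 [_ [V2 V3]]]].
  assert (C1 : left_solution beta cb ub vb xi (Qt1 1%nat xi)).
  { destruct (HQt1reg 1%nat xi ltac:(lia)); split; [apply C3_derivable3 | split]; assumption. }
  assert (C2 : right_solution beta cb ub vb xi (Qt2 1%nat xi)).
  { destruct (HQt2reg 1%nat xi ltac:(lia)); split; [apply C3_derivable3 | split]; assumption. }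
  assert (T1 : Gop beta ub vb xi (Q1 1%nat xi) 0 = Gop beta ub vb xi (Q2 1%nat xi) 0)
    by (rewrite U1, U2, Hinit; reflexivity).
  destruct (first_sweep beta cb ub vb xi Hbeta Hub0 Hubc (Q1 1%nat xi) (Q2 1%nat xi) (Q xi)
              (Qt1 1%nat xi) (Qt2 1%nat xi)) as [G1 G2]; auto.
  assert (Half : forall a, (RtoC (/ 2) * (a + a) = a)%C)
    by (intros a; apply injective_projections; simpl; field).
  rewrite G1, G2, Half in V1, V2.
  split; intros Hx.
  - apply (second_sweep_left beta cb ub vb xi Hbeta Hub0 Hubc); auto.
    rewrite V1; ring.
  - apply (second_sweep_right beta cb ub vb xi Hbeta Hub0 Hubc); auto.
    + rewrite V2, <- T1; ring.
    + rewrite V3; apply (trace_after_first_sweep beta cb ub vb xi Hbeta Hub0 Hubc); auto.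
Qed.
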